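(* Let $N$ be an Orlicz function with $N(1)=1$ satisfying the $\Delta_2$-condition at zero, i.e. $\limsup_{u\to0}N(2u)/N(u)<\infty$. Let $U_N$ be the Banach sequence lattice of real sequences $a$ with $$\|a\|_{U_N}=\inf\Big\{u>0:\sum_{k=1}^\infty2^{k-1}N\Big(\frac{|a_k|}{u}\Big)\le1\Big\}<\infty.$$ Then $\|a\|_{l_N}\asymp\|\sum_{k=0}^\infty a^*_{2^k}e_{k+1}\|_{U_N}$ (more precisely $\|a\|_{l_N}\le\|\sum_{k\ge0}a^*_{2^k}e_{k+1}\|_{U_N}\le4\|a\|_{l_N}$), and $E_{l_N}=U_N$ with equivalent norms.
   Context: An Orlicz function is an increasing convex continuous function $N$ on $[0,\infty)$ with $N(0)=0$ and $\lim_{t\to\infty}N(t)=\infty$. The Orlicz sequence space $l_N$ consists of real sequences $a$ with $\|a\|_{l_N}=\inf\{u>0:\sum_kN(|a_k|/u)\le1\}<\infty$. $a^*$ is the nonincreasing rearrangement of $(|a_k|)$. For a symmetric sequence space $X$, $E_X$ is the Banach sequence lattice of real sequences $a$ with $\|a\|_{E_X}:=\|\sum_{k=1}^\infty a_k\sum_{i=2^{k-1}}^{2^k-1}e_i\|_X<\infty$. *)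

From HB Require Import structures.
From mathcomp Require Import all_boot all_order all_algebra.
From mathcomp Require Import all_classical all_reals all_analysis.
Set Implicit Arguments. Unset Strict Implicit. Unset Printing Implicit Defensive.
Import Order.TTheory GRing.Theory Num.Theory numFieldNormedType.Exports.
Local Open Scope classical_set_scope.
Local Open Scope ring_scope.

(* Sequences are indexed from 0: the Rocq value a k is the paper's a_(k+1). *)

Definition orlicz {R : realType} (N : R -> R) : Prop :=
  [/\ N 0 = 0,
      (forall s t : R, 0 <= s -> s < t -> N s < N t),
      (forall (s t l : R), 0 <= s -> 0 <= t -> 0 <= l <= 1 ->
          N (l * s + (1 - l) * t) <= l * N s + (1 - l) * N t),
      {within [set x : R | 0 <= x], continuous N} &
      (forall M : R, exists t0 : R, forall t, t0 <= t -> M <= N t)].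

Definition delta2_zero {R : realType} (N : R -> R) : Prop :=
  exists (C d : R), 0 < d /\ forall u : R, 0 < u -> u < d -> N (2 * u) <= C * N u.

(* Luxemburg norm of l_N (value +oo when the sequence is not in l_N). *)
Definition lN_norm {R : realType} (N : R -> R) (a : nat -> R) : \bar R :=
  ereal_inf (EFin @` [set u : R | 0 < u /\
     (\sum_(0 <= k <oo) (N (`|a k| / u))%:E <= 1)%E]).

Definition Next {R : realType} (N : R -> R) (x : \bar R) : \bar R :=
  match x with EFin r => (N r)%:E | _ => +oo%E end.

(* Norm of U_N, for extended-real-valued sequences (paper index k = Rocq k+1,
   so the weight 2^(k-1) becomes 2^k). *)
Definition UN_norm {R : realType} (N : R -> R) (b : nat -> \bar R) : \bar R :=
  ereal_inf (EFin @` [set u : R | 0 < u /\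
     (\sum_(0 <= k <oo) ((2 ^ k)%:R)%:E * Next N (`|b k| * (u^-1)%:E) <= 1)%E]).

(* Nonincreasing rearrangement: astar a n = a^*_n (n >= 1)
   = inf { t >= 0 : #{k : |a_k| > t} < n }  (value in \bar R). *)
Definition astar {R : realType} (a : nat -> R) (n : nat) : \bar R :=
  ereal_inf (EFin @` [set t : R | 0 <= t /\
     exists s : seq nat, (size s < n)%N /\ forall k, t < `|a k| -> k \in s]).

Definition dyadic_rearr {R : realType} (a : nat -> R) : nat -> \bar R :=
  fun k => astar a (2 ^ k).

(* sum_k a_k sum_{i=2^(k-1)}^{2^k-1} e_i, 0-indexed: coordinate i gets
   a_(trunc_log 2 (i+1)). *)
Definition dyadic_expand {R : realType} (a : nat -> R) : nat -> R :=
  fun i => a (trunc_log 2 i.+1).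

Definition ElN_norm {R : realType} (N : R -> R) (a : nat -> R) : \bar R :=
  lN_norm N (dyadic_expand a).

From HB Require Import structures.
From mathcomp Require Import all_boot all_order all_algebra.
From mathcomp Require Import all_classical all_reals all_analysis.
From mathcomp Require Import zify ring.
Import Order.TTheory GRing.Theory Num.Theory numFieldNormedType.Exports.
Local Open Scope classical_set_scope.
Local Open Scope ring_scope.
Set Implicit Arguments. Unset Strict Implicit. Unset Printing Implicit Defensive.

(* With U_N the lattice with modular sum_k 2^k N(|b_k|) (0-indexed), we show
     ||a||_{l_N} <= ||(a^*_(2^k))_k||_{U_N} <= 4 ||a||_{l_N}
   for every Orlicz function N, and that E_{l_N} and U_N carry the same norm.

   Lower estimate: over distinct indices, the sum of N(|a_j|/v) is at most the
   sum of N(a^*_n/v) over the first ranks n (greedy_bound), and on the k-th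
   dyadic block of ranks a^*_n <= a^*_(2^k) (rearr_dyadic_bound); hence every
   v admissible for U_N is admissible for l_N.
   Upper estimate: at least 2^k values of |a| exceed a^*_(2^k)/2, so one can
   select distinct indices whose l_N modular controls half of the dyadic
   modular (dyadic_blocks_le_twice); convexity, N(y/2) <= N(y)/2, then shows
   that 4u is admissible for U_N whenever u is admissible for l_N.
   E_{l_N} = U_N: the l_N modular of dyadic_expand a, regrouped into dyadic
   blocks, is the U_N modular of a (nneseries_dyadic).
   Both estimates need a^* to be real-valued; this follows from admissibility
   (astar1_finite_of_UN, astar1_finite_of_lN). *)

Section OrliczFunction.
Variables (R : realType) (N : R -> R).
Hypothesis hN : orlicz N.

Lemma orlicz0 : N 0 = 0.
Proof. by case: hN. Qed.

Lemma orlicz_le (s t : R) : 0 <= s -> s <= t -> N s <= N t.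
Proof.
case: hN => _ Ninc _ _ _ s0 st.
by case: (ltgtP s t) st => // [/(Ninc _ _ s0) /ltW|->].
Qed.

Lemma orlicz_ge0 (s : R) : 0 <= s -> 0 <= N s.
Proof. by move=> s0; rewrite -orlicz0; apply: orlicz_le. Qed.

(* Convexity together with N 0 = 0 makes t |-> N t / t nondecreasing;
   we only need its instance at the ratio 1/2. *)
Lemma orlicz_half (y : R) : 0 <= y -> N (y / 2) <= N y / 2.
Proof.
move=> y0; case: (hN) => N0 _ Nconv _ _.
have := Nconv y 0 (2^-1) y0 (lexx 0).
rewrite invr_ge0 ler0n /= invf_le1 ?ler1n// => /(_ isT).
by rewrite !mulr0 N0 mulr0 !addr0 mulrC [_ * N y]mulrC.
Qed.

Lemma orlicz_quot_ge0 (x u : R) : 0 <= x -> 0 < u -> 0 <= N (x / u).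
Proof. by move=> x0 u0; rewrite orlicz_ge0 // divr_ge0 // ltW. Qed.

Lemma orlicz_quot_le (x y u : R) : 0 <= x -> x <= y -> 0 < u ->
  N (x / u) <= N (y / u).
Proof.
move=> x0 xy u0; apply: orlicz_le; first by rewrite divr_ge0 // ltW.
by rewrite ler_wpM2r // invr_ge0 ltW.
Qed.

Lemma Next_ge0 (y : \bar R) : (0 <= y)%E -> (0 <= Next N y)%E.
Proof.
case: y => [r| |] //= r0; rewrite ?leey //.
by rewrite lee_fin; apply: orlicz_ge0; rewrite -lee_fin.
Qed.

End OrliczFunction.

Lemma Next_quot (R : realType) (N : R -> R) (x u : R) : 0 <= x ->
  Next N (`|x%:E| * (u^-1)%:E) = (N (x / u))%:E.
Proof. by move=> x0; rewrite /= ger0_norm. Qed.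

Section Rearrangement.
Variables (R : realType) (a : nat -> R).

Definition many_above (t : R) (n : nat) : Prop :=
  forall s : seq nat, (size s < n)%N -> exists j, t < `|a j| /\ j \notin s.

Lemma astar_ge0 (n : nat) : (0 <= astar a n)%E.
Proof. by apply: le_ereal_inf_tmp => _ [t [t0 _] <-]; rewrite lee_fin. Qed.

Lemma astar_nonincr (n m : nat) : (n <= m)%N -> (astar a m <= astar a n)%E.
Proof.
move=> nm; apply: ereal_inf_le_tmp => _ [t [t0 [s [ss H]]] <-].
by exists t => //; split => //; exists s; split => //; exact: leq_trans nm.
Qed.

Lemma astar_lb (s : seq nat) (x : R) : uniq s -> 0 <= x ->
  (forall j, j \in s -> x <= `|a j|) -> (x%:E <= astar a (size s))%E.
Proof.
move=> us x0 H; apply: le_ereal_inf_tmp => _ [t [t0 [s' [ss' H']]] <-].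
rewrite lee_fin leNgt; apply/negP => tx.
have : (size s <= size s')%N.
  by apply: uniq_leq_size => // j /[dup] /H xj js; apply: H'; exact: lt_le_trans xj.
by rewrite leqNgt ss'.
Qed.

Lemma astar_many_above (n : nat) (t : R) : 0 <= t -> (t%:E < astar a n)%E ->
  many_above t n.
Proof.
move=> t0 ta s sn; apply: contrapT => hn.
suff : (astar a n <= t%:E)%E by rewrite leNgt ta.
apply: ereal_inf_lbound; exists t => //; split => //; exists s; split => //.
move=> k tk; apply: contrapT => ks; apply: hn; exists k; split => //.
exact/negP.
Qed.

Lemma astar_finite : (astar a 1 < +oo)%E ->
  forall n, (0 < n)%N -> astar a n = (fine (astar a n))%:E.
Proof.
move=> a1 n n0; rewrite fineK // ge0_fin_numE ?astar_ge0 //.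
exact: le_lt_trans (astar_nonincr n0) a1.
Qed.

Lemma fresh_indices (t : R) (n : nat) : many_above t n ->
  forall r s, (size s + r <= n)%N -> exists s2, [/\ uniq s2, size s2 = r,
     (forall j, j \in s2 -> t < `|a j|) & (forall j, j \in s2 -> j \notin s)].
Proof.
move=> H; elim=> [|r IH] s hs; first by exists [::].
have [s2 [u2 z2 h2 d2]] := IH s (leq_trans (leq_add (leqnn _) (leqnSn r)) hs).
have [j [tj]] : exists j, t < `|a j| /\ j \notin s ++ s2.
  by apply: H; rewrite size_cat z2; rewrite addnS in hs.
rewrite mem_cat negb_or => /andP[js1 js2].
exists (j :: s2); split => /=; first by rewrite js2.
- by rewrite z2.
- by move=> i; rewrite inE => /orP[/eqP->//|]; exact: h2.
- by move=> i; rewrite inE => /orP[/eqP->//|]; exact: d2.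
Qed.

End Rearrangement.

Section Sums.
Variable R : realType.

Lemma nneseries_le_bound (u : nat -> \bar R) (c : \bar R) :
  (forall n, (0 <= u n)%E) -> (forall k, (\sum_(0 <= i < k) u i <= c)%E) ->
  (\sum_(0 <= i <oo) u i <= c)%E.
Proof.
move=> u0 H; apply: lime_le; last exact: nearW.
by apply: is_cvg_nneseries => n _ _; exact: u0.
Qed.

Lemma psum_mono (f : nat -> R) (n m : nat) : (forall i, 0 <= f i) -> (n <= m)%N ->
  \sum_(0 <= i < n) f i <= \sum_(0 <= i < m) f i.
Proof.
move=> f0 nm; rewrite (big_cat_nat (leq0n n) nm) /= lerDl.
by apply: sumr_ge0 => i _; exact: f0.
Qed.

Lemma sum_uniq_le_series (f : nat -> R) (s : seq nat) : (forall i, 0 <= f i) ->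
  uniq s -> ((\sum_(j <- s) f j)%:E <= \sum_(0 <= i <oo) (f i)%:E)%E.
Proof.
move=> f0 us; set m := (\max_(j <- s) j).+1.
apply: le_trans (nneseries_lim_ge m (fun n _ _ => f0 n : (0 <= (f n)%:E)%E)).
rewrite sumEFin lee_fin.
have -> : \sum_(j <- s) f j = \sum_(0 <= i < m | i \in s) f i.
  rewrite -[RHS]big_filter; apply: perm_big; apply: uniq_perm => //.
    by rewrite filter_uniq // iota_uniq.
  move=> i; rewrite mem_filter /index_iota subn0 mem_iota /= add0n.
  case: (boolP (i \in s)) => //= iS; rewrite ltnS.
  by apply/esym; apply: (leq_bigmax_seq (F := id)) iS _.
by rewrite big_mkcond /=; apply: ler_sum => i _; case: ifP.
Qed.

Lemma seq_argmin (f : nat -> R) (s : seq nat) : s != [::] ->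
  exists2 j, j \in s & forall i, i \in s -> f j <= f i.
Proof.
elim: s => // x s IH _; case: (eqVneq s [::]) => [->|sn].
  by exists x => [|i]; rewrite ?mem_seq1 ?inE// => /eqP->.
case: (IH sn) => y ys Hy.
case: (leP (f x) (f y)) => [xy|yx].
  exists x; rewrite ?inE ?eqxx// => i; rewrite inE => /orP[/eqP->//|/Hy].
  exact: le_trans.
exists y; rewrite ?inE ?ys ?orbT// => i; rewrite inE => /orP[/eqP->|/Hy//].
exact: ltW.
Qed.

Lemma const_le_sum (f : nat -> R) (s : seq nat) (c : R) :
  (forall j, j \in s -> c <= f j) -> c *+ size s <= \sum_(j <- s) f j.
Proof.
elim: s => [|j s IH] H; first by rewrite big_nil.
rewrite big_cons /= mulrS; apply: lerD; first by apply: H; rewrite mem_head.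
by apply: IH => i iS; apply: H; rewrite inE iS orbT.
Qed.

(* Summing g (trunc_log 2 (i+1)) over i < 2^K - 1 visits the k-th dyadic
   block {2^k - 1, ..., 2^(k+1) - 2} of length 2^k for each k < K. *)
Lemma dyadic_block_sum (g : nat -> R) (K : nat) :
  \sum_(0 <= i < (2 ^ K).-1) g (trunc_log 2 i.+1) = \sum_(k < K) (2 ^ k)%:R * g k.
Proof.
elim: K => [|K IH]; first by rewrite expn0 big_geq // big_ord0.
rewrite big_ord_recr /= -IH.
have pos : (0 < 2 ^ K)%N by rewrite expn_gt0.
have hle : ((2 ^ K).-1 <= (2 ^ K.+1).-1)%N by rewrite -!subn1 leq_sub2r // leq_exp2l.
rewrite (big_cat_nat (leq0n _) hle) /=; congr (_ + _).
rewrite (eq_big_nat _ _ (F2 := fun _ => g K)); last first.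
  move=> i /andP[i1 i2]; congr g; apply: trunc_log_eq => //.
  rewrite -ltnS prednK // in i1; rewrite i1 /=.
  by rewrite -(ltn_add2r 1) !addn1 prednK ?expn_gt0 // in i2.
rewrite sumr_const_nat mulr_natl; congr (_ *+ _).
by rewrite expnS; move: pos; move: (2 ^ K)%N => x; lia.
Qed.

Lemma nneseries_dyadic (g : nat -> R) : (forall k, 0 <= g k) ->
  (\sum_(0 <= i <oo) (g (trunc_log 2 i.+1))%:E =
   \sum_(0 <= k <oo) ((2 ^ k)%:R * g k)%:E)%E.
Proof.
move=> g0.
have w0 n : (0 <= ((2 ^ n)%:R * g n)%:E)%E by rewrite lee_fin mulr_ge0.
have e0 n : (0 <= (g (trunc_log 2 n.+1))%:E)%E by rewrite lee_fin.
apply/le_anti/andP; split; apply: nneseries_le_bound => // k.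
  apply: le_trans (nneseries_lim_ge k (fun n _ _ => w0 n)).
  rewrite !sumEFin lee_fin [in leRHS]big_mkord -dyadic_block_sum.
  by apply: psum_mono => //; rewrite -ltnS prednK ?expn_gt0 // ltn_expl.
apply: le_trans (nneseries_lim_ge (2 ^ k).-1 (fun n _ _ => e0 n)).
by rewrite !sumEFin lee_fin big_mkord -dyadic_block_sum.
Qed.

End Sums.

Section DyadicBlocks.
Variables (R : realType) (N : R -> R).
Hypothesis hN : orlicz N.

Lemma dyadic_blocks_le_twice (a : nat -> R) (u : R) (t : nat -> R) :
  0 < u -> (forall k, 0 <= t k) ->
  (forall k, 0 < t k -> many_above a (t k) (2 ^ k)) ->
  forall K, exists s, [/\ uniq s, (size s <= 2 ^ K)%N &
    \sum_(k < K.+1) (2 ^ k)%:R * N (t k / u) <= 2 * \sum_(j <- s) N (`|a j| / u)].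
Proof.
move=> u0 t0 Ht.
have tle k j : t k < `|a j| -> N (t k / u) <= N (`|a j| / u).
  by move=> /ltW tj; exact (orlicz_quot_le hN (t0 k) tj u0).
elim=> [|K [s [us ss Hs]]].
  rewrite big_ord1 expn0 mul1r.
  have [->|tn] := eqVneq (t 0%N) 0.
    by exists [::]; split => //; rewrite mul0r (orlicz0 hN) big_nil mulr0.
  have tp : 0 < t 0%N by rewrite lt_neqAle eq_sym tn t0.
  have [j [tj _]] := Ht _ tp [::] isT.
  exists [:: j]; split => //; rewrite big_seq1.
  by apply: le_trans (tle _ _ tj) _; rewrite ler_peMl ?ler1n // (orlicz_quot_ge0 hN).
rewrite big_ord_recr /=.
have [->|tn] := eqVneq (t K.+1) 0.
  exists s; split => //; first by apply: leq_trans ss _; rewrite leq_exp2l.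
  by rewrite mul0r (orlicz0 hN) mulr0 addr0.
have tp : 0 < t K.+1 by rewrite lt_neqAle eq_sym tn t0.
have hs : (size s + 2 ^ K <= 2 ^ K.+1)%N by rewrite expnS mul2n -addnn leq_add2r.
have [s2 [u2 z2 h2 d2]] := fresh_indices (Ht _ tp) hs.
exists (s ++ s2); split.
- by rewrite cat_uniq us u2 andbT; apply/hasPn => j /d2.
- by rewrite size_cat z2 (leq_trans _ hs) // leq_add2r.
rewrite big_cat /= mulrDr; apply: lerD => //.
rewrite expnS natrM -mulrA; apply: ler_wpM2l => //.
by rewrite -z2 mulr_natl; apply: const_le_sum => j /h2 /tle.
Qed.

Variables (a x : nat -> R).
Hypothesis hx : forall n, (0 < n)%N -> astar a n = (x n)%:E.

Lemma rearr_ge0 (n : nat) : (0 < n)%N -> 0 <= x n.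
Proof. by move=> n0; rewrite -lee_fin -hx // astar_ge0. Qed.

Lemma rearr_nonincr (n m : nat) : (0 < n)%N -> (n <= m)%N -> x m <= x n.
Proof.
move=> n0 nm; have m0 : (0 < m)%N := leq_trans n0 nm.
by rewrite -lee_fin -hx // -hx // astar_nonincr.
Qed.

Lemma UN_series_rearr (u : R) :
  (\sum_(0 <= k <oo) ((2 ^ k)%:R)%:E * Next N (`|dyadic_rearr a k| * (u^-1)%:E) =
   \sum_(0 <= k <oo) ((2 ^ k)%:R * N (x (2 ^ k) / u))%:E)%E.
Proof.
apply: eq_eseriesr => k _.
by rewrite /dyadic_rearr hx ?expn_gt0 // Next_quot ?rearr_ge0 ?expn_gt0 // EFinM.
Qed.

(* Pairing the n-th smallest selected value with a^*_(size s - n): the sum of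
   N(|a_j|/v) over distinct indices is at most the sum over the first
   size s values of the rearrangement. *)
Lemma greedy_bound (v : R) : 0 < v -> forall s, uniq s ->
  \sum_(j <- s) N (`|a j| / v) <= \sum_(0 <= n < size s) N (x n.+1 / v).
Proof.
move=> v0 s; move Hm: (size s) => m; elim: m s Hm => [|m IH] s sm us.
  by move/size0nil: sm => ->; rewrite big_nil big_geq.
have sn : s != [::] by apply/eqP => s0; rewrite s0 in sm.
have [j0 j0s Hj0] := seq_argmin (fun j => `|a j|) sn.
rewrite (big_rem j0 j0s) big_nat_recr //= addrC; apply: lerD.
  by apply: IH; [rewrite size_rem // sm | exact: rem_uniq].
apply: (orlicz_quot_le hN) (normr_ge0 _) _ v0.
by have := astar_lb us (normr_ge0 (a j0)) Hj0; rewrite sm hx // lee_fin.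
Qed.

(* Replacing a^*_(i+1) by the larger a^*_(2^k) on the k-th dyadic block. *)
Lemma rearr_dyadic_bound (v : R) (m : nat) : 0 < v ->
  \sum_(0 <= i < (2 ^ m).-1) N (x i.+1 / v) <=
  \sum_(k < m) (2 ^ k)%:R * N (x (2 ^ k) / v).
Proof.
move=> v0; rewrite -(dyadic_block_sum (fun k => N (x (2 ^ k) / v))).
apply: ler_sum => i _.
apply: (orlicz_quot_le hN) _ _ v0; first by rewrite rearr_ge0.
by apply: rearr_nonincr; [rewrite expn_gt0 | apply: trunc_logP].
Qed.

Lemma lN_series_le_of_rearr (v : R) : 0 < v ->
  (\sum_(0 <= k <oo) ((2 ^ k)%:R * N (x (2 ^ k) / v))%:E <= 1)%E ->
  (\sum_(0 <= k <oo) (N (`|a k| / v))%:E <= 1)%E.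
Proof.
move=> v0 HU; apply: nneseries_le_bound => [k|m].
  by rewrite lee_fin (orlicz_quot_ge0 hN) ?normr_ge0.
have w0 k : (0 <= ((2 ^ k)%:R * N (x (2 ^ k) / v))%:E)%E.
  by rewrite lee_fin mulr_ge0 // (orlicz_quot_ge0 hN) // rearr_ge0 // expn_gt0.
apply: le_trans (le_trans (nneseries_lim_ge m (fun k _ _ => w0 k)) HU).
rewrite !sumEFin lee_fin [in leRHS]big_mkord.
have ui : uniq (index_iota 0 m) by exact: iota_uniq.
have sz : size (index_iota 0 m) = m by rewrite /index_iota size_iota subn0.
have mono : \sum_(0 <= n < m) N (x n.+1 / v) <=
            \sum_(0 <= n < (2 ^ m).-1) N (x n.+1 / v).
  apply: psum_mono => [i|]; first by rewrite (orlicz_quot_ge0 hN) // rearr_ge0.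
  by rewrite -ltnS prednK ?expn_gt0 // ltn_expl.
apply: le_trans (greedy_bound v0 ui) _; rewrite sz.
exact: le_trans mono (rearr_dyadic_bound m v0).
Qed.

(* Upper estimate: if u is admissible for l_N, then 4u is admissible for
   U_N(a^*_(2^k)); the factor 4 = 2 * 2 comes from the strict level
   a^*_(2^k)/2 and from the factor 2 in dyadic_blocks_le_twice. *)
Lemma UN_series_le_of_lN (u : R) : 0 < u ->
  (\sum_(0 <= k <oo) (N (`|a k| / u))%:E <= 1)%E ->
  (\sum_(0 <= k <oo) ((2 ^ k)%:R * N (x (2 ^ k) / (4 * u)))%:E <= 1)%E.
Proof.
move=> u0 HL.
have single s : uniq s -> \sum_(j <- s) N (`|a j| / u) <= 1.
  move=> us; rewrite -lee_fin; apply: le_trans HL; apply: sum_uniq_le_series us.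
  by move=> i; rewrite (orlicz_quot_ge0 hN) ?normr_ge0.
apply: nneseries_le_bound => [k|K].
  by rewrite lee_fin mulr_ge0 // (orlicz_quot_ge0 hN) ?rearr_ge0 ?expn_gt0 ?mulr_gt0.
rewrite sumEFin lee_fin; case: K => [|K]; first by rewrite big_geq.
pose t k := x (2 ^ k) / 2.
have t0 k : 0 <= t k by rewrite divr_ge0 ?rearr_ge0 ?expn_gt0.
have Ht k : 0 < t k -> many_above a (t k) (2 ^ k).
  move=> tk; apply: astar_many_above => //.
  rewrite hx ?expn_gt0 // lte_fin /t ltr_pdivrMr // ltr_pMr ?ltr1n //.
  by rewrite pmulr_lgt0 // in tk.
have [s [us _ Hs]] := dyadic_blocks_le_twice u0 t0 Ht K.
apply: le_trans (single s us).
rewrite -(ler_pM2l (_ : 0 < 2)) //; apply: le_trans Hs.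
rewrite -(big_mkord xpredT (fun k => (2 ^ k)%:R * N (t k / u))) mulr_sumr.
apply: ler_sum => k _; rewrite mulrCA; apply: ler_wpM2l => //.
have -> : x (2 ^ k) / (4 * u) = t k / u / 2 by rewrite /t; field; rewrite gt_eqF.
rewrite mulrC -ler_pdivlMr //.
exact (orlicz_half hN (divr_ge0 (t0 k) (ltW u0))).
Qed.

End DyadicBlocks.

Section NormEstimates.
Variables (R : realType) (N : R -> R).
Hypothesis hN : orlicz N.

Lemma astar1_finite_of_UN (a : nat -> R) (v : R) : 0 < v ->
  (\sum_(0 <= k <oo) ((2 ^ k)%:R)%:E * Next N (`|dyadic_rearr a k| * (v^-1)%:E) <= 1)%E ->
  (astar a 1 < +oo)%E.
Proof.
move=> v0 HU; rewrite ltey; apply/negP => /eqP a1.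
have w0 k : (0 <= ((2 ^ k)%:R)%:E * Next N (`|dyadic_rearr a k| * (v^-1)%:E))%E.
  apply: mule_ge0; first by rewrite lee_fin.
  by apply: (Next_ge0 hN); apply: mule_ge0 => //; rewrite lee_fin invr_ge0 ltW.
have := le_trans (nneseries_lim_ge 1 (fun k _ _ => w0 k)) HU.
rewrite big_nat1 /dyadic_rearr expn0 a1 /= gt0_mulye ?lte_fin ?invr_gt0 // mul1e.
by rewrite leNgt ltey.
Qed.

(* Admissibility for l_N forces a^*_1 to be finite: N(T/u) >= 2 for large T,
   while each single term N(|a_j|/u) is at most 1. *)
Lemma astar1_finite_of_lN (a : nat -> R) (u : R) : 0 < u ->
  (\sum_(0 <= k <oo) (N (`|a k| / u))%:E <= 1)%E -> (astar a 1 < +oo)%E.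
Proof.
move=> u0 HL; rewrite ltey; apply/negP => /eqP a1.
case: (hN) => _ Ninc _ _ /(_ 2) [t1 Ht1].
pose T := u * (`|t1| + 1).
have T0 : 0 <= T by rewrite mulr_ge0 ?addr_ge0 // ltW.
have aT : (T%:E < astar a 1)%E by rewrite a1 ltey.
have [j [Tj _]] := astar_many_above T0 aT (s := [::]) isT.
have Nj : N (`|a j| / u) <= 1.
  rewrite -lee_fin; apply: le_trans HL.
  have := sum_uniq_le_series (s := [:: j]) (fun i => orlicz_quot_ge0 hN (normr_ge0 (a i)) u0) isT.
  by rewrite big_seq1.
have NT : 2 <= N (T / u).
  rewrite /T mulrC mulKf ?gt_eqF //; apply: Ht1.
  by apply: le_trans (ler_norm t1) _; rewrite lerDl.
have NTj : N (T / u) < N (`|a j| / u).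
  by apply: Ninc; [rewrite divr_ge0 // ltW | rewrite ltr_pM2r // invr_gt0].
by have := lt_le_trans (le_lt_trans NT NTj) Nj; rewrite ltNge ler1n.
Qed.

Lemma lN_norm_le_UN_norm (a : nat -> R) :
  (lN_norm N a <= UN_norm N (dyadic_rearr a))%E.
Proof.
apply: le_ereal_inf => _ [v [v0 HU] <-]; exists v => //; split => //.
have hx := astar_finite (astar1_finite_of_UN v0 HU).
apply: (lN_series_le_of_rearr hN hx v0).
by rewrite -(UN_series_rearr N hx).
Qed.

Lemma UN_norm_le_4lN_norm (a : nat -> R) :
  (UN_norm N (dyadic_rearr a) <= 4%:E * lN_norm N a)%E.
Proof.
rewrite /lN_norm -ereal_inf_pZl ?ltr0n //.
apply: le_ereal_inf => _ [_ [u [u0 HL] <-] <-].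
exists (4 * u); last by rewrite EFinM.
split; first by rewrite mulr_gt0.
have hx := astar_finite (astar1_finite_of_lN u0 HL).
by rewrite (UN_series_rearr N hx); exact (UN_series_le_of_lN hN hx u0 HL).
Qed.

End NormEstimates.

(* Grouping the dyadic blocks of dyadic_expand a turns the l_N modular into
   the U_N modular, so the two norms coincide. *)
Lemma ElN_norm_UN_norm (R : realType) (N : R -> R) (a : nat -> R) :
  (forall s, 0 <= s -> 0 <= N s) ->
  ElN_norm N a = UN_norm N (fun k => (a k)%:E).
Proof.
move=> N0.
have series_eq u : 0 < u ->
  (\sum_(0 <= k <oo) (N (`|dyadic_expand a k| / u))%:E =
   \sum_(0 <= k <oo) ((2 ^ k)%:R)%:E * Next N (`|(a k)%:E| * (u^-1)%:E))%E.
  move=> u0; rewrite /dyadic_expand (nneseries_dyadic (g := fun k => N (`|a k| / u))).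
    by apply: eq_eseriesr => k _; rewrite EFinM.
  by move=> k; apply: N0; rewrite divr_ge0 // ltW.
rewrite /ElN_norm /lN_norm /UN_norm; congr (ereal_inf (EFin @` _)).
by apply: eq_set => u; apply/propext; split=> -[u0 Hu]; rewrite ?series_eq // -?series_eq.
Qed.

Unset Implicit Arguments.

Theorem mainTheorem18 (R : realType) (N : R -> R) :
  orlicz N -> N 1 = 1 -> delta2_zero N ->
  (forall a : nat -> R,
     (lN_norm N a <= UN_norm N (dyadic_rearr a))%E /\
     (UN_norm N (dyadic_rearr a) <= 4%:E * lN_norm N a)%E) /\
  (exists C : R, 0 < C /\ forall a : nat -> R,
     (ElN_norm N a <= C%:E * UN_norm N (fun k => (a k)%:E))%E /\
     (UN_norm N (fun k => (a k)%:E) <= C%:E * ElN_norm N a)%E).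
Proof.
move=> hN _ _; split=> [a|].
  by split; [exact: lN_norm_le_UN_norm | exact: UN_norm_le_4lN_norm].
exists 1; split=> // a.
by rewrite (ElN_norm_UN_norm a (fun s s0 => orlicz_ge0 hN s0)) mul1e.
Qed.
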